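(* Let $M=(E,\mathcal{L})$ be a matroid with finitarization $M^{\mathrm{fin}}$, and define $\hat{M}=(E,\mathcal{K})$ where $S\in\mathcal{K}$ if and only if there exist a base $F$ of $M^{\mathrm{fin}}$ and a base $B$ of $M$ with $B\subseteq F$ and $S\subseteq F\setminus B$. If $M$ is nearly finitary and $\hat{M}$ is a matroid, then $M$ is $k$-nearly finitary for some integer $k$.
   Context: A matroid $(E,\mathcal{L})$: $\emptyset\in\mathcal{L}$; subsets of independent sets are independent; if $B$ is maximal in $\mathcal{L}$ and $A\in\mathcal{L}$ is not maximal, then $A\cup\{b\}\in\mathcal{L}$ for some $b\in B\setminus A$; for $A\in\mathcal{L}$ and $A\subseteq X\subseteq E$ the family $\{S\in\mathcal{L}:A\subseteq S\subseteq X\}$ has a maximal element. Bases are maximal independent sets. The finitarization $M^{\mathrm{fin}}=(E,\mathcal{L}^{\mathrm{fin}})$, where $\mathcal{L}^{\mathrm{fin}}$ is the set of $S\subseteq E$ all of whose finite subsets lie in $\mathcal{L}$, is a matroid. $M$ is nearly finitary if $F\setminus B$ is finite whenever a base $F$ of $M^{\mathrm{fin}}$ contains a base $B$ of $M$; $M$ is $k$-nearly finitary if $|F\setminus B|\le k$ for all such pairs. *)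

From mathcomp Require Import all_boot.
From mathcomp Require Import boolp classical_sets functions cardinality.
Set Implicit Arguments. Unset Strict Implicit. Unset Printing Implicit Defensive.
Local Open Scope classical_set_scope.
Local Open Scope card_scope.

Definition maximal_in {E : Type} (P : set (set E)) (B : set E) : Prop :=
  P B /\ forall S, P S -> B `<=` S -> S = B.

Definition is_base {E : Type} (L : set (set E)) (B : set E) : Prop :=
  maximal_in L B.

Definition is_matroid {E : Type} (L : set (set E)) : Prop :=
  [/\ L set0,
      (forall A B, L B -> A `<=` B -> L A),
      (forall A B, is_base L B -> L A -> ~ is_base L A ->
          exists b, B b /\ ~ A b /\ L (A `|` [set b]))
    & (forall A X, L A -> A `<=` X ->
          exists M, maximal_in [set S | L S /\ A `<=` S /\ S `<=` X] M)].

Definition finitarization {E : Type} (L : set (set E)) : set (set E) :=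
  [set S | forall F, finite_set F -> F `<=` S -> L F].

Definition nearly_finitary {E : Type} (L : set (set E)) : Prop :=
  forall F B, is_base (finitarization L) F -> is_base L B -> B `<=` F ->
    finite_set (F `\` B).

Definition k_nearly_finitary {E : Type} (k : nat) (L : set (set E)) : Prop :=
  forall F B, is_base (finitarization L) F -> is_base L B -> B `<=` F ->
    (F `\` B) #<= `I_k.

Definition hat_indep {E : Type} (L : set (set E)) : set (set E) :=
  [set S | exists F B, is_base (finitarization L) F /\ is_base L B /\
             B `<=` F /\ S `<=` F `\` B].

From mathcomp Require Import all_boot.
From mathcomp Require Import boolp classical_sets functions cardinality finmap.
Set Implicit Arguments. Unset Strict Implicit. Unset Printing Implicit Defensive.

(* Since M is nearly finitary, every set F \ B, and hence every set
   independent in \hat M, is finite; in particular \hat M has a finite base,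
   of size k say.  In any matroid with a finite base of size k, the exchange
   axiom turns a finite independent set into one of the same size with fewer
   elements outside the base, so every finite independent set has at most k
   elements.  Applied in \hat M to the independent sets F \ B this gives the
   uniform bound k. *)

Local Open Scope classical_set_scope.

Section MatroidBases.

Variables (T : Type) (K : set (set T)).
Hypothesis KM : is_matroid K.

Lemma matroid_base_exists : exists B, is_base K B.
Proof.
case: KM => K0 _ _ Kmax.
have [B [[KB _] Bmax]] := Kmax set0 setT K0 (sub0set _).
exists B; split=> // S KS BS; apply: Bmax => //.
by split; [|split; [exact: sub0set|]].
Qed.

Lemma matroid_exchange (B I : set T) x : is_base K B -> K I -> I x -> ~ B x ->
  exists y, [/\ B y, ~ I y & K ((I `\ x) `|` [set y])].
Proof.
case: KM => _ Ksub Kaug _ baseB KI Ix Bx.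
have Ix_sub : I `\ x `<=` I by move=> z [].
have nbase : ~ is_base K (I `\ x).
  by case=> _ /(_ I KI Ix_sub) eqI; move: Ix; rewrite eqI => -[_]; apply.
have [y [By [nIy Ky]]] := Kaug _ _ baseB (Ksub _ _ KI Ix_sub) nbase.
exists y; split=> // Iy; apply: nIy; split=> // /= yx.
by apply: Bx; rewrite -yx.
Qed.

End MatroidBases.

Lemma indep_card_le_base (T : choiceType) (K : set (set T)) (b i : {fset T}) :
  is_matroid K -> is_base K [set` b] -> K [set` i] -> (#|` i| <= #|` b|)%N.
Proof.
move=> KM baseb; have [n] := ubnP #|` (i `\` b)%fset|.
elim: n i => // n IH i lt_n Ki.
have [ib|] := boolP (i `<=` b)%fset; first exact: fsubset_leq_card.
case/fsubsetPn=> x xi xb.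
have [y [yb /negP yi Kj]] := matroid_exchange KM baseb Ki xi (negP xb).
pose j := (y |` (i `\ x))%fset.
have yx : y != x by apply: contraNneq xb => <-.
have card_j : #|` j| = #|` i|.
  rewrite cardfsU1 in_fsetD1 yx (negPf yi) /=.
  by rewrite (cardfsD1 x i) xi.
have shrink : (j `\` b = (i `\` b) `\ x)%fset.
  apply/fsetP=> z; rewrite !inE.
  case: (z =P y) => [->|_]; rewrite ?yb ?andbF //=.
  by rewrite andbCA.
apply: leq_trans (IH j _ _); first by rewrite card_j.
  rewrite shrink -ltnS; apply: leq_trans lt_n.
  by apply/fproper_ltn_card/fproperD1/fsetDP.
suff -> : [set` j] = [set` i] `\ x `|` [set y] by [].
apply/seteqP; split=> z /=; rewrite !inE.
  by case/orP=> [/eqP ->|/andP[/eqP zx zi]]; [right|left].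
by case=> [[zi /eqP zx]|->]; rewrite ?eqxx // zi zx orbT.
Qed.

Lemma hat_indep_finite (E : Type) (L : set (set E)) (S : set E) :
  nearly_finitary L -> hat_indep L S -> finite_set S.
Proof.
move=> nfL [F [B [baseF [baseB [BF SFB]]]]].
exact: sub_finite_set SFB (nfL F B baseF baseB BF).
Qed.

Lemma card_le_I_fset_set (T : choiceType) (A : set T) (n : nat) :
  finite_set A -> (#|` fset_set A| <= n)%N -> (A #<= `I_n)%card.
Proof.
move=> /finite_setP[m Am]; rewrite (card_fset_set Am) -card_le_II.
by apply: card_le_trans; move: Am; rewrite card_eq_le => /andP[].
Qed.

Theorem theorem3p4p1 (E : Type) (L : set (set E)) :
  is_matroid L -> nearly_finitary L -> is_matroid (hat_indep L) ->
  exists k : nat, k_nearly_finitary k L.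
Proof.
move=> _ nfL hatM.
pose T := {classic E}.
have [M baseM] := matroid_base_exists hatM.
have finM : finite_set M by apply: hat_indep_finite nfL baseM.1.
exists #|` fset_set (M : set T)| => F B baseF baseB BF.
have indepFB : hat_indep L (F `\` B) by exists F, B; do 3!split=> //.
have finFB := hat_indep_finite nfL indepFB.
apply: (@card_le_I_fset_set T _ _ finFB).
by apply: (@indep_card_le_base T (hat_indep L) _ _ hatM); rewrite fset_setK.
Qed.
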